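(* Let $r:M\to M'$ be an epimorphism and $s:N'\to N$ a monomorphism in an abelian category $\mathcal{A}$. (1) If $N$ is strongly $M$-Rickart, then $N'$ is strongly $M'$-Rickart. (2) If $N$ is dual strongly $M$-Rickart, then $N'$ is dual strongly $M'$-Rickart.
   Context: A morphism $f:X\to Y$ is a section if $f'f=1_X$ for some $f'$, a retraction if $ff'=1_Y$ for some $f'$. A monomorphism $k:K\to X$ is fully invariant if for every $h:X\to X$ there is $\alpha:K\to K$ with $hk=k\alpha$; an epimorphism $c:X\to C$ is fully coinvariant if for every $h:X\to X$ there is $\gamma:C\to C$ with $ch=\gamma c$. For objects $M,N$: $N$ is strongly $M$-Rickart if the kernel ${\rm ker}(f)$ of every morphism $f:M\to N$ is a fully invariant section (of $M$); $N$ is dual strongly $M$-Rickart if the cokernel ${\rm coker}(f)$ of every morphism $f:M\to N$ is a fully coinvariant retraction (equivalently the image of $f$ is a fully invariant section of $N$). *)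

From HB Require Import structures.
From mathcomp Require Import all_boot all_order all_algebra.
Set Implicit Arguments. Unset Strict Implicit. Unset Printing Implicit Defensive.
Import GRing.Theory.
Local Open Scope ring_scope.

Record PreaddCat := {
  obj : Type;
  Mor : obj -> obj -> zmodType;
  comp : forall A B C : obj, Mor B C -> Mor A B -> Mor A C;
  idm : forall A : obj, Mor A A;
  compA : forall A B C D (h : Mor C D) (g : Mor B C) (f : Mor A B),
      comp h (comp g f) = comp (comp h g) f;
  comp1m : forall A B (f : Mor A B), comp (idm B) f = f;
  compm1 : forall A B (f : Mor A B), comp f (idm A) = f;
  compDl : forall A B C (g1 g2 : Mor B C) (f : Mor A B),
      comp (g1 + g2) f = comp g1 f + comp g2 f;
  compDr : forall A B C (g : Mor B C) (f1 f2 : Mor A B),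
      comp g (f1 + f2) = comp g f1 + comp g f2
}.

Arguments comp {p A B C} g f.
Arguments idm {p} A.

Notation "g \oc f" := (comp g f) (at level 40, left associativity).

Section CatDefs.
Context {C : PreaddCat}.
Implicit Types A B X Y : obj C.

Definition mono {A B} (f : Mor A B) : Prop :=
  forall X (g h : Mor X A), f \oc g = f \oc h -> g = h.

Definition epi {A B} (f : Mor A B) : Prop :=
  forall Y (g h : Mor B Y), g \oc f = h \oc f -> g = h.

Definition section {A B} (f : Mor A B) : Prop :=
  exists f' : Mor B A, f' \oc f = idm A.

Definition retraction {A B} (f : Mor A B) : Prop :=
  exists f' : Mor B A, f \oc f' = idm B.

Definition is_kernel {A B K} (f : Mor A B) (k : Mor K A) : Prop :=
  f \oc k = 0 /\
  forall X (g : Mor X A), f \oc g = 0 -> exists! u : Mor X K, k \oc u = g.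

Definition is_cokernel {A B Q} (f : Mor A B) (c : Mor B Q) : Prop :=
  c \oc f = 0 /\
  forall Y (g : Mor B Y), g \oc f = 0 -> exists! u : Mor Q Y, u \oc c = g.

Definition fully_invariant {K X} (k : Mor K X) : Prop :=
  mono k /\ forall h : Mor X X, exists alpha : Mor K K, h \oc k = k \oc alpha.

Definition fully_coinvariant {X Q} (c : Mor X Q) : Prop :=
  epi c /\ forall h : Mor X X, exists gamma : Mor Q Q, c \oc h = gamma \oc c.

End CatDefs.

Record AbelianCategory := {
  cat :> PreaddCat;
  zero_ob : obj cat;
  zero_ob_id : idm zero_ob = 0;
  biprod : obj cat -> obj cat -> obj cat;
  bp_i1 : forall A B, Mor A (biprod A B);
  bp_i2 : forall A B, Mor B (biprod A B);
  bp_p1 : forall A B, Mor (biprod A B) A;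
  bp_p2 : forall A B, Mor (biprod A B) B;
  bp_p1i1 : forall A B, bp_p1 A B \oc bp_i1 A B = idm A;
  bp_p2i2 : forall A B, bp_p2 A B \oc bp_i2 A B = idm B;
  bp_p1i2 : forall A B, bp_p1 A B \oc bp_i2 A B = 0;
  bp_p2i1 : forall A B, bp_p2 A B \oc bp_i1 A B = 0;
  bp_sum : forall A B,
      bp_i1 A B \oc bp_p1 A B + bp_i2 A B \oc bp_p2 A B = idm (biprod A B);
  ker_ob : forall A B : obj cat, Mor A B -> obj cat;
  ker : forall A B (f : Mor A B), Mor (ker_ob f) A;
  ker_spec : forall A B (f : Mor A B), is_kernel f (ker f);
  coker_ob : forall A B : obj cat, Mor A B -> obj cat;
  coker : forall A B (f : Mor A B), Mor B (coker_ob f);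
  coker_spec : forall A B (f : Mor A B), is_cokernel f (coker f);
  mono_normal : forall A B (m : Mor A B), mono m ->
      exists (Q : obj cat) (g : Mor B Q), is_kernel g m;
  epi_normal : forall A B (e : Mor A B), epi e ->
      exists (K : obj cat) (g : Mor K A), is_cokernel g e
}.

Arguments ker {a A B} f.
Arguments coker {a A B} f.

Definition strongly_rickart {C : AbelianCategory} (M N : obj C) : Prop :=
  forall f : Mor M N, section (ker f) /\ fully_invariant (ker f).

Definition dual_strongly_rickart {C : AbelianCategory} (M N : obj C) : Prop :=
  forall f : Mor M N, retraction (coker f) /\ fully_coinvariant (coker f).

From Pilot Require Import Defs.
From mathcomp Require Import all_boot all_order all_algebra.
Set Implicit Arguments. Unset Strict Implicit. Unset Printing Implicit Defensive.
Import GRing.Theory.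
Local Open Scope ring_scope.

(* Given f : M' -> N', put g := s f r : M -> N.  Since s is mono, ker g is
   the kernel of f r, and by hypothesis it is a fully invariant summand
   k : K -> M with retraction e.  Full invariance makes the complementary
   idempotent p := 1 - k e kill every morphism K -> M.  As ker r lies in K,
   p = sig r for some sig : M' -> M, and f r sig = f.  Then 1 - r sig factors
   through ker f and splits it.  For full invariance it suffices that
   sig h (ker f) = 0 for every endomorphism h of M': r maps K onto ker f
   (pullbacks of epimorphisms are epimorphisms) and sig h r k = p sig h r k = 0.
   Part (2) is part (1) in the opposite category. *)

Section Preadditive.
Variable C : PreaddCat.
Implicit Types A B D X : obj C.

Lemma comp0m A B D (f : Mor A B) : (0 : Mor B D) \oc f = 0.
Proof.
have H := compDl (0 : Mor B D) 0 f; rewrite addr0 in H.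
by apply: (addrI (0 \oc f)); rewrite addr0 -H.
Qed.

Lemma compm0 A B D (g : Mor B D) : g \oc (0 : Mor A B) = 0.
Proof.
have H := compDr g (0 : Mor A B) 0; rewrite addr0 in H.
by apply: (addrI (g \oc 0)); rewrite addr0 -H.
Qed.

Lemma compNl A B D (g : Mor B D) (f : Mor A B) : (- g) \oc f = - (g \oc f).
Proof. by apply: (addrI (g \oc f)); rewrite -compDl !subrr comp0m. Qed.

Lemma compNr A B D (g : Mor B D) (f : Mor A B) : g \oc (- f) = - (g \oc f).
Proof. by apply: (addrI (g \oc f)); rewrite -compDr !subrr compm0. Qed.

Lemma compBl A B D (g1 g2 : Mor B D) (f : Mor A B) :
  (g1 - g2) \oc f = g1 \oc f - g2 \oc f.
Proof. by rewrite compDl compNl. Qed.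

Lemma compBr A B D (g : Mor B D) (f1 f2 : Mor A B) :
  g \oc (f1 - f2) = g \oc f1 - g \oc f2.
Proof. by rewrite compDr compNr. Qed.

Lemma epi_comp0 A B (f : Mor A B) D (g : Mor B D) :
  epi f -> g \oc f = 0 -> g = 0.
Proof. by move=> ef gf0; apply: ef; rewrite gf0 comp0m. Qed.

Lemma mono_comp0 A B (f : Mor A B) X (g : Mor X A) :
  mono f -> f \oc g = 0 -> g = 0.
Proof. by move=> mf fg0; apply: mf; rewrite fg0 compm0. Qed.

Lemma epi_by_comp0 A B (f : Mor A B) :
  (forall D (g : Mor B D), g \oc f = 0 -> g = 0) -> epi f.
Proof.
move=> f_epi0 D g1 g2 eq_gf; apply/eqP; rewrite -subr_eq0; apply/eqP/f_epi0.
by rewrite compBl eq_gf subrr.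
Qed.

Lemma kernel_mono A B K (f : Mor A B) (k : Mor K A) : is_kernel f k -> mono k.
Proof.
move=> [fk0 k_univ] X g1 g2 eq_kg.
have [u [_ u_uniq]] : exists! u, k \oc u = k \oc g1.
  by apply: k_univ; rewrite Defs.compA fk0 comp0m.
by rewrite -(u_uniq g1 erefl) (u_uniq g2 (esym eq_kg)).
Qed.

Lemma kernel_factor A B K (f : Mor A B) (k : Mor K A) X (y : Mor X A) :
  is_kernel f k -> f \oc y = 0 -> exists v : Mor X K, y = k \oc v.
Proof. by move=> [_ k_univ] /k_univ [v [kv _]]; exists v. Qed.

Section FullyInvariantSummand.
Variables (K M : obj C) (k : Mor K M) (e : Mor M K).
Hypothesis ek : e \oc k = idm K.

Lemma compl_idem_kills : (idm M - k \oc e) \oc k = 0.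
Proof. by rewrite compBl comp1m -Defs.compA ek compm1 subrr. Qed.

Lemma compl_idem_idem :
  (idm M - k \oc e) \oc (idm M - k \oc e) = idm M - k \oc e.
Proof. by rewrite [in LHS]compBr compm1 Defs.compA compl_idem_kills comp0m subr0. Qed.

(* [Hom(K, M/K) = 0]: every w : K -> M factors through k, via h := w e. *)
Lemma fully_invariant_compl_kills :
  fully_invariant k -> forall w : Mor K M, (idm M - k \oc e) \oc w = 0.
Proof.
move=> [_ k_inv] w; have [alpha walpha] := k_inv (w \oc e).
have -> : w = k \oc alpha by rewrite -walpha -Defs.compA ek compm1.
by rewrite Defs.compA compl_idem_kills comp0m.
Qed.

End FullyInvariantSummand.

End Preadditive.

Section Abelian.
Variable C : AbelianCategory.

(* P is the kernel of [r, -x] : A (+) X -> B. *)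
Lemma epi_pullback (A B X : obj C) (r : Mor A B) (x : Mor X B) : epi r ->
  exists (P : obj C) (e : Mor P X) (y : Mor P A), epi e /\ r \oc y = x \oc e.
Proof.
move=> r_epi; pose phi := r \oc bp_p1 A X - x \oc bp_p2 A X.
have [phik phi_univ] := ker_spec phi.
exists (ker_ob phi), (bp_p2 A X \oc ker phi), (bp_p1 A X \oc ker phi).
split; last by apply/eqP; rewrite -subr_eq0 !Defs.compA -compBl phik.
have phi_i1 : phi \oc bp_i1 A X = r.
  by rewrite compBl -!Defs.compA bp_p1i1 bp_p2i1 compm1 compm0 subr0.
have phi_epi : epi phi.
  apply: epi_by_comp0 => D b bphi0; apply: (epi_comp0 r_epi).
  by rewrite -phi_i1 Defs.compA bphi0 comp0m.
have [Z [g0 [phig0 g0_univ]]] := epi_normal phi_epi.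
apply: epi_by_comp0 => D a ae0.
have [w [kw _]] := phi_univ _ g0 phig0.
have [b [bphi _]] : exists! b : Mor B D, b \oc phi = a \oc bp_p2 A X.
  by apply: g0_univ; rewrite -kw Defs.compA -(Defs.compA a) ae0 comp0m.
have b0 : b = 0.
  apply: (epi_comp0 r_epi).
  by rewrite -phi_i1 Defs.compA bphi -Defs.compA bp_p2i1 compm0.
by rewrite -[a]compm1 -(bp_p2i2 A X) Defs.compA -bphi b0 !comp0m.
Qed.

Section StronglyRickartTransfer.
Variables (M M' N N' : obj C) (r : Mor M M') (s : Mor N' N) (f : Mor M' N').
Hypotheses (r_epi : epi r) (s_mono : mono s).

Local Notation g := (s \oc (f \oc r)).

Lemma ker_comp_factor X (y : Mor X M) :
  f \oc (r \oc y) = 0 -> exists v, y = ker g \oc v.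
Proof.
by move=> fry0; apply: kernel_factor (ker_spec g) _; rewrite -!Defs.compA fry0 compm0.
Qed.

Lemma comp_ker_comp : f \oc (r \oc ker g) = 0.
Proof.
by apply: (mono_comp0 s_mono); rewrite !Defs.compA -(Defs.compA s); case: (ker_spec g).
Qed.

Variable e : Mor M (ker_ob g).
Hypotheses (ek : e \oc ker g = idm _) (kg_inv : fully_invariant (ker g)).

Local Notation p := (idm M - ker g \oc e).

Lemma compl_idem_kills_ker_comp X (y : Mor X M) :
  f \oc (r \oc y) = 0 -> p \oc y = 0.
Proof.
by move=> /ker_comp_factor [v ->]; rewrite Defs.compA compl_idem_kills // comp0m.
Qed.

(* r is the cokernel of its kernel, which p kills. *)
Lemma compl_idem_factor : exists sig : Mor M' M, sig \oc r = p.
Proof.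
have [Z [g0 [rg0 r_univ]]] := epi_normal r_epi.
have pg0 : p \oc g0 = 0.
  by apply: compl_idem_kills_ker_comp; rewrite rg0 compm0.
by have [sig [sigr _]] := r_univ _ _ pg0; exists sig.
Qed.

Variable sig : Mor M' M.
Hypothesis sigr : sig \oc r = p.

Lemma compl_idem_sig : p \oc sig = sig.
Proof. by apply: r_epi; rewrite -Defs.compA sigr compl_idem_idem. Qed.

Lemma comp_r_sig : f \oc (r \oc sig) = f.
Proof.
apply: r_epi; rewrite -!Defs.compA sigr compBr compm1 compBr !Defs.compA -(Defs.compA f).
by rewrite comp_ker_comp comp0m subr0.
Qed.

Lemma sig_ker : sig \oc ker f = 0.
Proof.
rewrite -compl_idem_sig -Defs.compA; apply: compl_idem_kills_ker_comp.
by rewrite !Defs.compA -(Defs.compA f) comp_r_sig; case: (ker_spec f).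
Qed.

Lemma sig_endo_ker (h : Mor M' M') : sig \oc (h \oc ker f) = 0.
Proof.
have [fk0 _] := ker_spec f.
have [P [eps [y [eps_epi ry]]]] := epi_pullback (ker f) r_epi.
have [v yv] : exists v, y = ker g \oc v.
  by apply: ker_comp_factor; rewrite ry Defs.compA fk0 comp0m.
apply: (epi_comp0 eps_epi); rewrite -!Defs.compA -ry yv -compl_idem_sig.
rewrite -!Defs.compA !(Defs.compA _ _ v).
by rewrite (fully_invariant_compl_kills ek kg_inv) comp0m.
Qed.

Lemma ker_section : section (ker f).
Proof.
have [fk0 k_univ] := ker_spec f.
have fpi : f \oc (idm M' - r \oc sig) = 0 by rewrite compBr compm1 comp_r_sig subrr.
have [q [kq _]] := k_univ _ _ fpi.
exists q; apply: (kernel_mono (ker_spec f)).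
by rewrite compm1 Defs.compA kq compBl comp1m -Defs.compA sig_ker compm0 subr0.
Qed.

Lemma ker_fully_invariant : fully_invariant (ker f).
Proof.
split=> [|h]; first exact: kernel_mono (ker_spec f).
apply: kernel_factor (ker_spec f) _.
by rewrite -[X in X \oc _]comp_r_sig -!Defs.compA sig_endo_ker !compm0.
Qed.

End StronglyRickartTransfer.

Lemma strongly_rickart_transfer (M M' N N' : obj C) (r : Mor M M') (s : Mor N' N) :
  epi r -> mono s -> strongly_rickart M N -> strongly_rickart M' N'.
Proof.
move=> r_epi s_mono MN f.
have [[e ek] kg_inv] := MN (s \oc (f \oc r)).
have [sig sigr] := compl_idem_factor r_epi ek.
split; first exact: (ker_section r_epi s_mono ek sigr).
exact: (ker_fully_invariant r_epi s_mono ek kg_inv sigr).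
Qed.

End Abelian.

Section Opposite.
Variable C : AbelianCategory.

Definition op_preadd : PreaddCat.
Proof.
refine (@Build_PreaddCat (obj C) (fun A B => Mor B A)
  (fun A B D g f => f \oc g) (fun A => idm A) _ _ _ _ _).
- by move=> A B D E h g f; rewrite Defs.compA.
- by move=> A B f; rewrite compm1.
- by move=> A B f; rewrite comp1m.
- by move=> A B D g1 g2 f; rewrite compDr.
- by move=> A B D g f1 f2; rewrite compDl.
Defined.

Definition op_abelian : AbelianCategory.
Proof.
refine (@Build_AbelianCategory op_preadd (zero_ob C) (zero_ob_id C) (@biprod C)
  (@bp_p1 C) (@bp_p2 C) (@bp_i1 C) (@bp_i2 C) _ _ _ _ _
  (fun A B f => @coker_ob C B A f) (fun A B f => @coker C B A f) _
  (fun A B f => @ker_ob C B A f) (fun A B f => @ker C B A f) _ _ _).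
- exact: bp_p1i1.
- exact: bp_p2i2.
- exact: bp_p2i1.
- exact: bp_p1i2.
- exact: bp_sum.
- by move=> A B f; exact: coker_spec.
- by move=> A B f; exact: ker_spec.
- by move=> A B m; exact: epi_normal.
- by move=> A B m; exact: mono_normal.
Defined.

End Opposite.

Theorem theorem2p17 (C : AbelianCategory) (M M' N N' : obj C)
  (r : Mor M M') (s : Mor N' N) (hr : epi r) (hs : mono s) :
  (strongly_rickart M N -> strongly_rickart M' N') /\
  (dual_strongly_rickart M N -> dual_strongly_rickart M' N').
Proof.
split; first exact: strongly_rickart_transfer hr hs.
(* In the opposite category kernels are the cokernels of C, sections are
   retractions, and the roles of r and s (epi / mono) swap. *)
exact: (@strongly_rickart_transfer (op_abelian C) N N' M M' s r hs hr).
Qed.
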